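(* Consider the coordination game described in the context, in which each agent $i$ observes $x_i=\theta+\epsilon^x_i$ and $y_i=A+\epsilon^y_i$, where $(\epsilon^x_i,\epsilon^y_i)$ has joint density $f(\epsilon^x,\epsilon^y)$. Suppose that $\epsilon^y_i\in[-\sigma,\sigma]$, i.e. $f(\epsilon^x,\epsilon^y)=0$ for all $|\epsilon^y|>\sigma$ and all $\epsilon^x\in\mathbb{R}$, where $0<\sigma<\tfrac12$. Then there exists a continuum (an uncountable family) of distinct equilibria $A(\cdot)$.
   Context: A unit mass of agents $i\in[0,1]$ each choose $a_i\in\{0,1\}$ ($a_i=1$: attack the status quo). The aggregate attack is $A=\int_0^1 a_i\,di$. The status quo has strength $\theta\in\mathbb{R}$ and is abandoned iff $A\ge\theta$. An attacking agent pays cost $c\in(0,1)$ and gets $1$ if the status quo is abandoned (net $1-c$), otherwise net $-c$; not attacking yields $0$. Agents hold an (improper) uniform prior over $\theta$ on $\mathbb{R}$. Agent $i$ receives private signals $x_i=\theta+\epsilon^x_i$ and $y_i=A+\epsilon^y_i$, where the error pairs $(\epsilon^x_i,\epsilon^y_i)$ are independent across agents with joint density $f$; the structure is common knowledge. Given a conjectured (measurable) aggregate attack function $A:\mathbb{R}\to[0,1]$, the posterior of an agent with signals $(x,y)$ is $P[\theta\in S\mid x,y,A(\cdot)]=\int_S f(x-\theta,y-A(\theta))\,d\theta\big/\int_{\mathbb{R}} f(x-\theta,y-A(\theta))\,d\theta$ (equivalently, the limit as $N\to\infty$ of the posterior under a uniform prior on $[t-N,t+N]$). An agent attacks iff $P[A(\theta)\ge\theta\mid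 x,y,A(\cdot)]\ge c$. An equilibrium is a function $A:\mathbb{R}\to[0,1]$ such that for all $\theta\in\mathbb{R}$, $A(\theta)=\int_{\mathbb{R}^2}\chi\{(\epsilon^x,\epsilon^y): P[A(\theta')\ge\theta'\mid x=\theta+\epsilon^x,\,y=A(\theta)+\epsilon^y,\,A(\cdot)]\ge c\}\,f(\epsilon^x,\epsilon^y)\,d\epsilon^x d\epsilon^y$, where $\theta'$ denotes the random fundamental under the posterior and $\chi$ is the indicator function. *)

From HB Require Import structures.
From mathcomp Require Import all_boot all_order all_algebra.
From mathcomp Require Import all_classical all_reals all_analysis.
Set Implicit Arguments. Unset Strict Implicit. Unset Printing Implicit Defensive.
Import Order.TTheory GRing.Theory Num.Theory.
Local Open Scope classical_set_scope.
Local Open Scope ring_scope.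

Definition leb (R : realType) := (@lebesgue_measure R).
Definition leb2 (R : realType) := ((@lebesgue_measure R) \x (@lebesgue_measure R))%E.

Definition is_joint_density (R : realType) (f : R -> R -> R) : Prop :=
  (forall ex ey, 0 <= f ex ey) /\
  measurable_fun [set: R * R] (fun p : R * R => f p.1 p.2) /\
  (\int[@leb2 R]_(p in [set: R * R]) (f p.1 p.2)%:E = 1)%E.

(* Unnormalized posterior mass (improper uniform prior) of a set S of
   fundamentals for an agent with signals (x, y), given the conjectured
   aggregate attack function A. *)
Definition post_mass (R : realType) (f : R -> R -> R) (A : R -> R)
    (x y : R) (S : set R) : \bar R :=
  (\int[@leb R]_(t in S) (f (x - t) (y - A t))%:E)%E.

(* The agent attacks iff P[A(theta') >= theta' | x, y, A] >= c, where the
   posterior probability is post_mass (success set) / post_mass (all of R).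
   This is written multiplicatively (numerator >= c * denominator), which
   coincides with the ratio condition whenever the denominator is in (0,+oo). *)
Definition attacks (R : realType) (f : R -> R -> R) (c : R) (A : R -> R)
    (x y : R) : Prop :=
  (c%:E * post_mass f A x y [set: R] <= post_mass f A x y [set t | (t <= A t)%R])%E.

Definition equilibrium (R : realType) (f : R -> R -> R) (c : R) (A : R -> R)
    : Prop :=
  measurable_fun [set: R] A /\
  (forall t, 0 <= A t <= 1) /\
  (forall t,
    (\int[@leb2 R]_(e in [set: R * R])
        ((\1_[set e : R * R | attacks f c A (t + e.1) (A t + e.2)] e)
          * f e.1 e.2)%:E)%E
    = (A t)%:E).

(* For a threshold s in [0, 1], the step function A = 1_]-oo, s] is an
   equilibrium.  Since |eps_y| <= sigma < 1/2, a signal y = A(theta) + eps_y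
   can only come from fundamentals on the agent's own side of s.  Below s they
   all satisfy t <= s <= 1 = A(t), so the agent attacks.  Above s they all
   have A(t) = 0 < t, so the success mass is 0 and, [attacks] being stated
   multiplicatively, the agent attacks exactly when the whole posterior mass
   vanishes, i.e. when f(., eps_y) puts no mass below eps_x + (theta - s).
   By Fubini this event is f-null: each of its eps_y-sections is a down-set S
   whose points x all have no mass below x + (theta - s), hence no mass on S.
   Thresholds are recovered from the equilibria, and r |-> 1 / (1 + e^r)
   injects R into [0, 1]. *)

From HB Require Import structures.
From mathcomp Require Import all_boot all_order all_algebra.
From mathcomp Require Import all_classical all_reals all_analysis.
From mathcomp Require Import measurable_realfun ring lra.
Import Order.TTheory GRing.Theory Num.Theory.
Local Open Scope classical_set_scope.
Local Open Scope ring_scope.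

Section reflection.
Context {R : realType} (a : R).
Notation mu := (@lebesgue_measure R).

Let reflect (t : R) := a - t.

Let measurable_reflect :
  measurable_fun (T := measurableTypeR R) (U := measurableTypeR R) setT reflect.
Proof. by apply: measurable_funB => //; exact: measurable_cst. Qed.

Lemma lebesgue_measure_reflect_itv (x y : R) :
  mu `]x, y]%classic = mu (reflect @^-1` `]x, y]%classic).
Proof.
have -> : reflect @^-1` `]x, y]%classic = `[a - y, a - x[%classic.
  apply/seteqP; split => t; rewrite /reflect /= !in_itv /= => /andP[? ?];
    by apply/andP; split; lra.
rewrite !lebesgue_measure_itv /= !lte_fin.
have [xy|yx] := ltP x y; last by rewrite ifF //; apply/negbTE; rewrite -leNgt; lra.
by rewrite ifT; [rewrite -EFinD; congr EFin; ring | lra].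
Qed.

Lemma ge0_integral_reflect (h : R -> \bar R) :
  measurable_fun setT h -> (forall u, (0 <= h u)%E) ->
  (\int[mu]_t h (a - t)%R = \int[mu]_u h u)%E.
Proof.
move=> mh h0.
have := ge0_integral_pushforward measurable_reflect mu measurableT mh (fun u _ => h0 u).
rewrite preimage_setT => <-.
apply: eq_measure_integral => A mA _.
apply/esym; apply: lebesgue_measure_unique mA => _ [[x y] _ <-].
exact: lebesgue_measure_reflect_itv.
Qed.
End reflection.

Lemma integral_mkcond_indic {d} {T : measurableType d} {R : realType}
    (mu : {measure set T -> \bar R}) (D : set T) (g : T -> R) :
  (\int[mu]_(x in D) (g x)%:E = \int[mu]_x (\1_D x * g x)%:E)%E.
Proof.
by rewrite integral_mkcond epatch_indic; apply: eq_integral => x _; rewrite /= -EFinM mulrC.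
Qed.

Section downset.
Context (R : realType).
Notation mu := (@lebesgue_measure R).
Local Open Scope ereal_scope.

Lemma ge0_integral_downset_eq0 (g : R -> R) (S : set R) (d : R) :
  (0 < d)%R -> (forall x, 0 <= g x)%R -> measurable_fun setT g -> measurable S ->
  (forall x y, y <= x -> S x -> S y)%R ->
  (forall x, S x -> \int[mu]_(u in `]-oo, (x + d)%R[) (g u)%:E = 0) ->
  \int[mu]_(x in S) (g x)%:E = 0.
Proof.
move=> d0 g0 mg mS Sdown Sg0.
have g0E u : 0 <= (g u)%:E by rewrite lee_fin.
apply/eqP; rewrite eq_le integral_ge0 ?andbT //.
have [[x0 Sx0]|/set0P/negP/negPn/eqP->] := pselect (S !=set0); last by rewrite integral_set0.
(* A bounded S lies below x + d for some x in S; an unbounded one is R. *)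
have [Sub|Sunb] := pselect (has_ubound S).
  have supS : has_sup S by split; [exists x0 | ].
  have [x Sx supSx] := sup_adherent d0 supS.
  rewrite -(Sg0 x Sx); apply: ge0_subset_integral => //=.
  - by apply/measurable_EFinP; exact: measurable_funTS.
  - move=> u Su /=; rewrite in_itv /=.
    by apply: le_lt_trans (sup_upper_bound supS Su) _; rewrite -ltrBlDr.
have ST r : S r.
  apply: contrapT => nSr; apply: Sunb; exists r => y Sy.
  by rewrite leNgt; apply/negP => ry; exact/nSr/(Sdown y r (ltW ry) Sy).
pose F n := `]-oo, (n%:R + d)%R[%classic : set R.
have FT : \bigcup_n F n = setT.
  apply/seteqP; split => // u _; exists (Num.bound `|u|) => //.
  rewrite /F /= in_itv /=; apply: (le_lt_trans (ler_norm u)).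
  by apply: (lt_le_trans (archi_boundP (normr_ge0 u))); rewrite lerDl ltW.
have -> : S = \bigcup_n F n by rewrite FT; apply/seteqP; split=> // r _; exact: ST.
have cvgF := @ge0_nondecreasing_set_cvg_integral _ (measurableTypeR R) _ F (EFin \o g) mu.
rewrite -(cvg_lim _ (cvgF _ _ _ _)) //.
- rewrite (_ : (fun i => _) = cst 0) ?lim_cst //.
  by apply/funext => n; exact: Sg0.
- move=> n m nm; rewrite subsetEset => u; rewrite /F /= !in_itv /= => /lt_le_trans; apply.
  by rewrite lerD2r ler_nat.
- by move=> n; exact: measurable_itv.
- by move=> n; apply/measurable_EFinP; exact: measurable_funTS.
- by move=> n x _; exact: g0E.
Qed.
End downset.

Section lower_mass.
Context {R : realType} (f : R -> R -> R).
Hypotheses (f_ge0 : forall x y, 0 <= f x y)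
  (mf : measurable_fun setT (fun p : R * R => f p.1 p.2)).
Notation mu := (@lebesgue_measure R).
Local Open Scope ereal_scope.

Definition lower_mass (d : R) (e : R * R) : \bar R :=
  \int[mu]_(u in `]-oo, (e.1 + d)%R[) (f u e.2)%:E.

Lemma lower_mass_ge0 d e : 0 <= lower_mass d e.
Proof. by apply: integral_ge0 => u _; rewrite lee_fin. Qed.

Lemma le_lower_mass d y a b : (a <= b)%R -> lower_mass d (a, y) <= lower_mass d (b, y).
Proof.
move=> ab; apply: ge0_subset_integral => //=.
- apply/measurable_EFinP; apply: measurable_funTS.
  exact: (measurable_fun_pair1 y mf).
- by move=> u _; rewrite lee_fin.
- by move=> u /=; rewrite !in_itv /= => /lt_le_trans; apply; rewrite lerD2r.
Qed.

Lemma measurable_lower_mass d : measurable_fun setT (lower_mass d).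
Proof.
pose G (q : (R * R) * R) := (\1_`]-oo, d[ (q.2 - q.1.1) * f q.2 q.1.2)%:E.
have -> : lower_mass d = fun e => \int[mu]_u G (e, u).
  apply/funext => e; rewrite /lower_mass integral_mkcond_indic.
  apply: eq_integral => u _; rewrite /G /= !indicE !mem_setE !in_itv /=.
  by rewrite ltrBlDl.
apply: (measurable_fun_fubini_tonelli_F (m2 := mu) G) => [|q]; last first.
  by rewrite lee_fin mulr_ge0.
apply/measurable_EFinP; apply: measurable_funM.
  apply: measurableT_comp (measurable_indic _) _; first exact: measurable_itv.
  by apply: measurable_funB => //; exact: measurableT_comp.
have mswap : measurable_fun setT (fun q : (R * R) * R => (q.2, q.1.2)).
  by apply: measurable_fun_pair => //; exact: measurableT_comp.
exact: measurableT_comp mf mswap.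
Qed.

Lemma lower_mass_null d : (0 < d)%R ->
  \int[@leb2 R]_e (\1_[set e | lower_mass d e = 0] e * f e.1 e.2)%:E = 0.
Proof.
move=> d0; set Z := [set e | _ = _].
have mlm := measurable_lower_mass d.
have mZ : measurable Z by rewrite -[Z]setTI; exact: mlm (emeasurable_set1 0).
rewrite /leb2 fubini_tonelli2; last 2 first.
- apply/measurable_EFinP; apply: measurable_funM => //; exact: measurable_indic.
- by move=> e; rewrite lee_fin mulr_ge0.
apply: integral0_eq => y _; rewrite /fubini_G /=.
rewrite -(integral_mkcond_indic mu [set x | Z (x, y)] (f^~ y)).
apply: (@ge0_integral_downset_eq0 R _ _ d d0) => //.
- exact: measurable_fun_pair1 y mf.
- rewrite -[X in measurable X]setTI.
  exact: (measurable_fun_pair1 y mlm) (emeasurable_set1 0).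
- move=> a b ba Za; apply/eqP; rewrite eq_le lower_mass_ge0 andbT.
  by rewrite -[leRHS]Za; exact: le_lower_mass.
Qed.
End lower_mass.

Lemma indic_iff {R : realType} {T} (A B : set T) x : (A x <-> B x) -> \1_A x = \1_B x :> R.
Proof.
move=> AB; rewrite !indicE; have [Ax|nAx] := pselect (A x).
  by rewrite !mem_set //; exact/AB.
by rewrite !memNset // => /AB.
Qed.

Section attack_decision.
Context (R : realType) (f : R -> R -> R) (c : R) (A : R -> R) (x y : R).
Hypothesis f_ge0 : forall ex ey, 0 <= f ex ey.
Local Open Scope ereal_scope.

Lemma post_mass_ge0 S : 0 <= post_mass f A x y S.
Proof. by apply: integral_ge0 => t _; rewrite lee_fin. Qed.

Lemma attacks_failure_null : (c <= 1)%R ->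
  (forall t, (A t < t)%R -> f (x - t) (y - A t) = 0%R) -> attacks f c A x y.
Proof.
move=> c1 fail0; rewrite /attacks.
have -> : post_mass f A x y [set t | t <= A t]%R = post_mass f A x y setT.
  rewrite /post_mass integral_mkcond; apply: eq_integral => t _; rewrite patchE.
  have [tA|At] := leP t (A t); first by rewrite mem_set.
  by rewrite memNset ?fail0 //; apply/negP; rewrite -ltNge.
by apply: gee_pMl; rewrite ?lee_fin ?post_mass_ge0.
Qed.

Lemma attacks_success_null : (0 < c)%R ->
  (forall t, (t <= A t)%R -> f (x - t) (y - A t) = 0%R) ->
  attacks f c A x y <-> post_mass f A x y setT = 0.
Proof.
move=> c0 success0; rewrite /attacks.
have -> : post_mass f A x y [set t | t <= A t]%R = 0.
  by apply: integral0_eq => t /success0 ->.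
split=> [|->]; last by rewrite mule0.
by rewrite pmule_rle0 ?lte_fin // => D0; apply/eqP; rewrite eq_le D0 post_mass_ge0.
Qed.

End attack_decision.

Definition cutoff {R : realType} (s : R) : R -> R := \1_`]-oo, s].

Section cutoff.
Context {R : realType}.
Implicit Types s t : R.

Lemma cutoff_le s t : t <= s -> cutoff s t = 1.
Proof. by move=> ts; rewrite /cutoff indicE mem_set //= in_itv /= ts. Qed.

Lemma cutoff_gt s t : s < t -> cutoff s t = 0.
Proof. by move=> st; rewrite /cutoff indicE memNset //= in_itv /= leNgt st. Qed.

Lemma cutoff_ge0_le1 s t : 0 <= cutoff s t <= 1.
Proof. by rewrite /cutoff indicE; case: (_ \in _); rewrite ?lexx ?ler01. Qed.

Lemma measurable_cutoff s : measurable_fun setT (cutoff s).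
Proof. by apply: measurable_indic; exact: measurable_itv. Qed.

Lemma cutoff_inj : injective (@cutoff R).
Proof.
suff le_cutoff s s' : cutoff s = cutoff s' -> s <= s'.
  by move=> s s' ss'; apply/le_anti; rewrite !le_cutoff.
move=> ss'; rewrite leNgt; apply/negP => /cutoff_gt.
by rewrite -ss' cutoff_le // => /eqP; rewrite oner_eq0.
Qed.

End cutoff.

Section cutoff_equilibrium.
Context (R : realType) (c sigma : R) (f : R -> R -> R) (s : R).
Hypotheses (c_gt0 : 0 < c) (c_le1 : c <= 1) (sigma_lt : sigma < 1 / 2)
  (s_ge0 : 0 <= s) (s_le1 : s <= 1).
Hypotheses (f_ge0 : forall ex ey, 0 <= f ex ey)
  (mf : measurable_fun setT (fun p : R * R => f p.1 p.2))
  (f_mass1 : (\int[@leb2 R]_(p in [set: R * R]) (f p.1 p.2)%:E = 1)%E)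
  (f_supp : forall ex ey, sigma < `|ey| -> f ex ey = 0).

Let noise_bounded e : f e.1 e.2 != 0 -> `|e.2| <= sigma.
Proof. by move=> fe; rewrite leNgt; apply: contra fe => /(f_supp e.1)/eqP. Qed.

Let noise_off_by_one z : `|z| <= sigma -> sigma < `|1 + z| /\ sigma < `|z - 1|.
Proof.
rewrite ler_norml => /andP[z_ge z_le]; have := sigma_lt; split.
- by apply: (lt_le_trans _ (ler_norm _)); lra.
- by rewrite distrC; apply: (lt_le_trans _ (ler_norm _)); lra.
Qed.

Let attack_set th :=
  [set e : R * R | attacks f c (cutoff s) (th + e.1) (cutoff s th + e.2)].

Lemma cutoff_attacks_below th e : th <= s -> f e.1 e.2 != 0 -> attack_set th e.
Proof.
move=> ths /noise_bounded/noise_off_by_one[far _].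
rewrite /attack_set /= cutoff_le //; apply: attacks_failure_null => // t At.
have st : s < t.
  by rewrite ltNge; apply: contraTN At => ts; rewrite -leNgt cutoff_le ?(le_trans ts).
by rewrite cutoff_gt // subr0; exact: f_supp.
Qed.

Lemma cutoff_attacks_above th e : s < th -> f e.1 e.2 != 0 ->
  attack_set th e <-> lower_mass f (th - s) e = 0%E.
Proof.
move=> sth /noise_bounded/noise_off_by_one[_ far].
rewrite /attack_set /= cutoff_gt // add0r.
have f_far t : t <= s -> f (th + e.1 - t) (e.2 - cutoff s t) = 0.
  by move=> ts; rewrite cutoff_le //; exact: f_supp.
rewrite attacks_success_null //; last first.
  move=> t; have [ts _|st] := leP t s; first exact: f_far.
  by rewrite cutoff_gt // => t0; have := lt_le_trans (le_lt_trans s_ge0 st) t0; rewrite ltxx.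
suff -> : post_mass f (cutoff s) (th + e.1) e.2 setT = lower_mass f (th - s) e by [].
rewrite /lower_mass integral_mkcond_indic -(ge0_integral_reflect (th + e.1)); first last.
- by move=> u; rewrite lee_fin mulr_ge0.
- apply/measurable_EFinP; apply: measurable_funM; last exact: measurable_fun_pair1 e.2 mf.
  by apply: measurable_indic; exact: measurable_itv.
apply: eq_integral => t _; congr EFin; rewrite indicE.
have [ts|st] := leP t s.
  by rewrite f_far // memNset ?mul0r //; apply/negP; rewrite in_itv /= -leNgt; lra.
by rewrite cutoff_gt // subr0 mem_set ?mul1r //= in_itv /=; lra.
Qed.

Lemma cutoff_response_below th : th <= s ->
  (\int[@leb2 R]_(e in [set: R * R]) (\1_(attack_set th) e * f e.1 e.2)%:E)%E
  = (cutoff s th)%:E.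
Proof.
move=> ths; rewrite cutoff_le // -f_mass1; apply: eq_integral => e _; congr EFin.
have [->|fe] := eqVneq (f e.1 e.2) 0; first by rewrite mulr0.
by rewrite indicE mem_set ?mul1r //; exact: cutoff_attacks_below.
Qed.

Lemma cutoff_response_above th : s < th ->
  (\int[@leb2 R]_(e in [set: R * R]) (\1_(attack_set th) e * f e.1 e.2)%:E)%E
  = (cutoff s th)%:E.
Proof.
move=> sth; rewrite cutoff_gt // -[RHS](lower_mass_null f f_ge0 mf (th - s)) ?subr_gt0 //.
apply: eq_integral => e _; congr EFin.
have [->|fe] := eqVneq (f e.1 e.2) 0; first by rewrite !mulr0.
by congr (_ * _); apply: indic_iff; exact: cutoff_attacks_above.
Qed.

Lemma cutoff_equilibrium : equilibrium f c (cutoff s).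
Proof.
split; first exact: measurable_cutoff.
split=> [t|th]; first exact: cutoff_ge0_le1.
have [ths|sth] := leP th s; first exact: cutoff_response_below.
exact: cutoff_response_above.
Qed.

End cutoff_equilibrium.

Theorem proposition1 (R : realType) (c sigma : R) (f : R -> R -> R) :
  0 < c < 1 ->
  is_joint_density f ->
  0 < sigma < 1 / 2 ->
  (forall ex ey, sigma < `|ey| -> f ex ey = 0) ->
  exists E : R -> (R -> R),
    injective E /\ (forall s, equilibrium f c (E s)).
Proof.
move=> /andP[c_gt0 c_lt1] [f_ge0 [mf f_mass1]] /andP[_ sigma_lt] f_supp.
pose threshold r : R := (1 + expR r)^-1.
have threshold01 r : 0 <= threshold r <= 1.
  have e0 := expR_gt0 r; rewrite invr_ge0 invf_le1; lra.
have threshold_inj : injective threshold.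
  by move=> a b /invr_inj/addrI; exact: expR_inj.
exists (cutoff \o threshold); split=> [a b /cutoff_inj/threshold_inj //|r].
have /andP[s_ge0 s_le1] := threshold01 r.
exact: cutoff_equilibrium (ltW c_lt1) sigma_lt s_ge0 s_le1 f_ge0 mf f_mass1 f_supp.
Qed.
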